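(* Let $A>0$, $\alpha>0$ and let $k\ge3$ be an integer such that \[ \frac{4A^{1/2}k^{1/2}\alpha}{\pi^2}+\frac{2A^{1/4}k^{1/4}\alpha^{1/2}}{\pi}\big(k^{1/2}+k^{-1/2}\big)+1\le k. \] Then for every $a$ with $1\le a\le k^{1/2}$, \[ \lambda_k(R^A_a,\alpha)\ge\lambda_k(S_k,\alpha). \]
   Context: For a bounded open set $\Omega\subset\mathbb{R}^2$ with Lipschitz boundary (possibly disconnected) and $\alpha>0$, $\lambda_1(\Omega,\alpha)\le\lambda_2(\Omega,\alpha)\le\cdots$ denote the eigenvalues, counted with multiplicity, of the Robin Laplacian $-\Delta u=\lambda u$, $\partial_\nu u+\alpha u=0$ on $\partial\Omega$ (defined via the form $\int_\Omega\nabla u\cdot\overline{\nabla v}+\alpha\int_{\partial\Omega}u\overline v$ on $H^1(\Omega)$). $R^A_a$ is a rectangle with side lengths $A^{1/2}a$ and $A^{1/2}/a$; $S_k$ is the disjoint union of $k$ equal squares of total area $A$. *)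

From Stdlib Require Import Reals.
From Coquelicot Require Import Coquelicot.
Open Scope R_scope.

Fixpoint fsum (m : nat) (f : nat -> R) : R :=
  match m with O => 0 | S n => fsum n f + f n end.

Definition dx (u : R -> R -> R) (x y : R) : R := Derive (fun t => u t y) x.
Definition dy (u : R -> R -> R) (x y : R) : R := Derive (fun t => u x t) y.

Definition C1_R2 (u : R -> R -> R) : Prop :=
  forall x y : R,
    ex_derive (fun t => u t y) x /\ ex_derive (fun t => u x t) y /\
    continuous (fun p : R * R => dx u (fst p) (snd p)) (x, y) /\
    continuous (fun p : R * R => dy u (fst p) (snd p)) (x, y).

Definition dint (L1 L2 : R) (g : R -> R -> R) : R :=
  RInt (fun x => RInt (fun y => g x y) 0 L2) 0 L1.

Definition robin_energy (alpha L1 L2 : R) (u : R -> R -> R) : R :=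
  dint L1 L2 (fun x y => (dx u x y) ^ 2 + (dy u x y) ^ 2)
  + alpha * (RInt (fun x => (u x 0) ^ 2 + (u x L2) ^ 2) 0 L1
             + RInt (fun y => (u 0 y) ^ 2 + (u L1 y) ^ 2) 0 L2).

Definition l2norm2 (L1 L2 : R) (u : R -> R -> R) : R :=
  dint L1 L2 (fun x y => (u x y) ^ 2).

(* A domain made of m disjoint copies of the rectangle [0,L1]x[0,L2];
   a function on it is a family U : nat -> (R -> R -> R), U i on copy i (i < m). *)
Definition Qform (alpha : R) (m : nat) (L1 L2 : R) (U : nat -> R -> R -> R) : R :=
  fsum m (fun i => robin_energy alpha L1 L2 (U i)).
Definition Nform (m : nat) (L1 L2 : R) (U : nat -> R -> R -> R) : R :=
  fsum m (fun i => l2norm2 L1 L2 (U i)).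

Definition combo (k : nat) (F : nat -> nat -> R -> R -> R) (c : nat -> R)
  : nat -> R -> R -> R :=
  fun i x y => fsum k (fun j => c j * F j i x y).

Definition nonzero_coeffs (k : nat) (c : nat -> R) : Prop :=
  exists j, (j < k)%nat /\ c j <> 0.

(* F_0..F_{k-1} are C^1 test functions spanning a k-dimensional subspace
   (linearly independent as functions on the domain) *)
Definition admissible (m : nat) (L1 L2 : R) (k : nat) (F : nat -> nat -> R -> R -> R)
  : Prop :=
  (forall j i, (j < k)%nat -> (i < m)%nat -> C1_R2 (F j i)) /\
  (forall c, nonzero_coeffs k c -> 0 < Nform m L1 L2 (combo k F c)).

Definition max_rayleigh (alpha : R) (m : nat) (L1 L2 : R) (k : nat)
  (F : nat -> nat -> R -> R -> R) : Rbar :=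
  Lub_Rbar (fun r => exists c, nonzero_coeffs k c /\
     r = Qform alpha m L1 L2 (combo k F c) / Nform m L1 L2 (combo k F c)).

(* k-th Robin eigenvalue (with multiplicity, k >= 1) by the min-max principle *)
Definition robin_eig (alpha : R) (m : nat) (L1 L2 : R) (k : nat) : Rbar :=
  Glb_Rbar (fun r => exists F, admissible m L1 L2 k F /\
                                max_rayleigh alpha m L1 L2 k F = Finite r).

(* lambda_k(R^A_a, alpha): rectangle with sides sqrt A * a and sqrt A / a *)
Definition eig_rect (A a alpha : R) (k : nat) : Rbar :=
  robin_eig alpha 1 (sqrt A * a) (sqrt A / a) k.

(* lambda_k(S_n, alpha): n equal squares of total area A *)
Definition eig_squares (A alpha : R) (n k : nat) : Rbar :=
  robin_eig alpha n (sqrt (A / INR n)) (sqrt (A / INR n)) k.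

(* The k squares have λ_k(S_k) ≤ 4α/ℓ, ℓ = √(A/k): the functions constant on one square and
   zero elsewhere all have Rayleigh quotient α |∂Q| / |Q|.  Cut the rectangle into an
   m × n grid with m n < k; every k-dimensional space of test functions contains a nonzero u
   with zero mean on each cell, and the Neumann Poincaré inequality on the cells (the Robin
   boundary term being nonnegative) bounds its Rayleigh quotient below by
   min((π m / L1)^2, (π n / L2)^2).  With m = ⌈a T⌉, n = ⌈T / a⌉ and T chosen so that
   (π T / √A)^2 = 4α/ℓ, the hypothesis on k is what makes m n < k.
   On a cell, u is split into its average ū(x) over y and u - ū: the one-dimensional Wirtinger
   inequality in y bounds u - ū, the one in x bounds ū, whose x-mean vanishes.  Wirtinger's
   inequality in turn follows from the Dirichlet inequality for a primitive, proved with
   Picone's identity. *)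

From Stdlib Require Import Reals Lra Lia Psatz List ZArith.
From Coquelicot Require Import Coquelicot.
Open Scope R_scope.

(** * Real-valued continuity and integrals *)

Lemma continuous_plus_R (f g : R -> R) x :
  continuous f x -> continuous g x -> continuous (fun t => f t + g t) x.
Proof. apply (continuous_plus (V := R_NormedModule)). Qed.

Lemma continuous_minus_R (f g : R -> R) x :
  continuous f x -> continuous g x -> continuous (fun t => f t - g t) x.
Proof. apply (continuous_minus (V := R_NormedModule)). Qed.

Lemma continuous_mult_R (f g : R -> R) x :
  continuous f x -> continuous g x -> continuous (fun t => f t * g t) x.
Proof. apply (continuous_mult (K := R_AbsRing)). Qed.

Lemma continuous_pow2_R (f : R -> R) x :
  continuous f x -> continuous (fun t => f t ^ 2) x.
Proof.
  intros Hf. apply (continuous_ext (fun t => f t * f t)); [intros; simpl; ring|].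
  now apply continuous_mult_R.
Qed.

Lemma is_derive_continuous_R (f : R -> R) df x : is_derive f x df -> continuous f x.
Proof.
  intros Hf. apply (ex_derive_continuous (K := R_AbsRing) (V := R_NormedModule)).
  now exists df.
Qed.

Ltac solve_continuous :=
  repeat match goal with
  | |- continuous (fun _ => ?k) _ => apply continuous_const
  | |- continuous (fun t => t) _ => apply continuous_id
  | |- continuous (fun t => _ + _) _ => apply continuous_plus_R
  | |- continuous (fun t => _ - _) _ => apply continuous_minus_R
  | |- continuous (fun t => _ * _) _ => apply continuous_mult_R
  | |- continuous (fun t => _ ^ 2) _ => apply continuous_pow2_R
  | H : forall t, continuous ?f t |- continuous ?f _ => apply H
  | H : forall t, continuous ?f t |- continuous (fun t => ?f t) _ => apply H
  | H : continuous ?f ?x |- continuous ?f ?x => exact H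
  | H : continuous ?f ?x |- continuous (fun t => ?f t) ?x => exact H
  end.

Lemma ex_RInt_continuous_R (f : R -> R) a b : (forall t, continuous f t) -> ex_RInt f a b.
Proof. intros Hf. apply (ex_RInt_continuous (V := R_CompleteNormedModule)). auto. Qed.

Lemma RInt_plus_R (f g : R -> R) a b : ex_RInt f a b -> ex_RInt g a b ->
  RInt (fun x => f x + g x) a b = RInt f a b + RInt g a b.
Proof. apply (RInt_plus (V := R_CompleteNormedModule)). Qed.

Lemma RInt_minus_R (f g : R -> R) a b : ex_RInt f a b -> ex_RInt g a b ->
  RInt (fun x => f x - g x) a b = RInt f a b - RInt g a b.
Proof. apply (RInt_minus (V := R_CompleteNormedModule)). Qed.

Lemma RInt_scal_R (f : R -> R) k a b : ex_RInt f a b ->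
  RInt (fun x => k * f x) a b = k * RInt f a b.
Proof. apply (RInt_scal (V := R_CompleteNormedModule)). Qed.

Lemma RInt_ext_R (f g : R -> R) a b : (forall t, f t = g t) -> RInt f a b = RInt g a b.
Proof. intros H. apply RInt_ext. auto. Qed.

Lemma RInt_const_R (k : R) a b : RInt (fun _ => k) a b = (b - a) * k.
Proof. apply (RInt_const (V := R_CompleteNormedModule)). Qed.

Lemma RInt_lincomb_R (f g : R -> R) k l a b : ex_RInt f a b -> ex_RInt g a b ->
  RInt (fun t => k * f t + l * g t) a b = k * RInt f a b + l * RInt g a b.
Proof.
  intros Hf Hg. rewrite RInt_plus_R, !RInt_scal_R; auto;
    apply (ex_RInt_scal (V := R_NormedModule)); auto.
Qed.

Lemma RInt_le_R (f g : R -> R) a b : a <= b ->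
  (forall t, continuous f t) -> (forall t, continuous g t) ->
  (forall t, f t <= g t) -> RInt f a b <= RInt g a b.
Proof. intros Hab Hf Hg Hfg. apply RInt_le; auto using ex_RInt_continuous_R. Qed.

Lemma RInt_derive_R (h dh : R -> R) a b : a <= b ->
  (forall t, a <= t <= b -> is_derive h t (dh t)) ->
  (forall t, a <= t <= b -> continuous dh t) -> RInt dh a b = h b - h a.
Proof.
  intros Hab Hh Hdh. apply is_RInt_unique, (is_RInt_derive (V := R_CompleteNormedModule));
    rewrite Rmin_left, Rmax_right by lra; auto.
Qed.

Lemma RInt_sq_ge0 (f : R -> R) a b : a <= b -> (forall t, continuous f t) ->
  0 <= RInt (fun t => f t ^ 2) a b.
Proof.
  intros Hab Hf. apply RInt_ge_0; auto using pow2_ge_0.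
  apply ex_RInt_continuous_R. intros; solve_continuous.
Qed.

(* An equation whose left side is an [RInt] lives in Coquelicot's carrier type, where
   [ring] and [field] do not recognise [R]. *)
Ltac R_eq := match goal with |- ?x = ?y => change (@eq R x y) end.

(** * One-dimensional Poincaré inequalities *)

(* Picone's identity: for [r = c cot θ] with [θ' = c] one has [r' = -c^2 - r^2], hence
   [(f - F r)^2 = f^2 - c^2 F^2 - (F^2 r)'].  The phase [θ] is centred so that it stays
   in (0, π) on [a, b], where [r] is smooth. *)
Lemma dirichlet_poincare (F f : R -> R) a b c :
  a < b -> 0 < c -> c * (b - a) < PI ->
  (forall t, is_derive F t (f t)) -> (forall t, continuous f t) ->
  F a = 0 -> F b = 0 ->
  c ^ 2 * RInt (fun t => F t ^ 2) a b <= RInt (fun t => f t ^ 2) a b.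
Proof.
  intros Hab Hc HcL HF Hf Fa Fb.
  set (d := (PI - c * (b - a)) / 2).
  set (r := fun t => c * cos (c * (t - a) + d) / sin (c * (t - a) + d)).
  set (dh := fun t => 2 * F t * f t * r t + F t ^ 2 * (- c ^ 2 - r t ^ 2)).
  assert (HFc : forall t, continuous F t) by eauto using is_derive_continuous_R.
  assert (Hsin : forall t, a <= t <= b -> 0 < sin (c * (t - a) + d)).
  { intros t Ht. apply sin_gt_0; unfold d; nra. }
  assert (Hr : forall t, a <= t <= b -> continuous r t).
  { intros t Ht. specialize (Hsin t Ht).
    apply (ex_derive_continuous (K := R_AbsRing) (V := R_NormedModule)).
    unfold r. auto_derive. replace (c * (t + - a) + d) with (c * (t - a) + d) by ring. lra. }
  assert (Hdh : forall t, a <= t <= b -> is_derive (fun t => F t ^ 2 * r t) t (dh t)).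
  { intros t Ht. specialize (Hsin t Ht). unfold dh, r.
    auto_derive; replace (c * (t + - a) + d) with (c * (t - a) + d) by ring.
    - split; [now exists (f t) | lra].
    - replace (Derive (fun x => F x) t) with (f t) by (symmetry; apply is_derive_unique, HF).
      field. lra. }
  clearbody r.
  assert (Hint : RInt dh a b = 0).
  { rewrite (RInt_derive_R (fun t => F t ^ 2 * r t)); try lra; auto.
    - rewrite Fa, Fb. R_eq. ring.
    - intros t Ht. specialize (Hr t Ht). unfold dh. solve_continuous. }
  assert (Hex : forall g : R -> R, (forall t, a <= t <= b -> continuous g t) -> ex_RInt g a b).
  { intros g Hg. apply (ex_RInt_continuous (V := R_CompleteNormedModule)).
    rewrite Rmin_left, Rmax_right by lra. auto. }
  assert (Hpicone : RInt (fun t => (f t - F t * r t) ^ 2) a b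
     = RInt (fun t => f t ^ 2) a b - RInt dh a b - c ^ 2 * RInt (fun t => F t ^ 2) a b).
  { rewrite <- RInt_scal_R, <- !RInt_minus_R.
    1: apply RInt_ext_R; intros t; unfold dh; ring.
    all: apply Hex; intros t Ht; specialize (Hr t Ht); unfold dh; solve_continuous. }
  assert (0 <= RInt (fun t => (f t - F t * r t) ^ 2) a b).
  { apply RInt_ge_0; [lra| |intros; apply pow2_ge_0].
    apply Hex. intros t Ht. specialize (Hr t Ht). solve_continuous. }
  lra.
Qed.

Lemma le_mul_of_forall_lt (K X Y : R) : 0 < K -> 0 <= X ->
  (forall z, 0 < z < K -> z * X <= Y) -> K * X <= Y.
Proof.
  intros HK HX H. apply Rnot_lt_le. intros HY.
  set (e := (K * X - Y) / (2 * (X + 1))).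
  assert (He : 0 < e) by (apply Rdiv_lt_0_compat; lra).
  assert (HeX : e * X <= (K * X - Y) / 2).
  { unfold e. apply (Rmult_le_reg_r (2 * (X + 1))); [lra|].
    field_simplify; nra. }
  set (z := Rmax (K / 2) (K - e)).
  assert (Hz : 0 < z < K).
  { unfold z. split; [apply Rlt_le_trans with (K / 2); [lra|apply Rmax_l]|apply Rmax_lub_lt; lra]. }
  assert (z * X <= Y) by (apply H; exact Hz).
  assert ((K - e) * X <= z * X) by (apply Rmult_le_compat_r; [lra|apply Rmax_r]).
  nra.
Qed.

Lemma wirtinger_lt_pi (f f' : R -> R) a b c : a < b -> 0 < c -> c * (b - a) < PI ->
  (forall t, is_derive f t (f' t)) -> (forall t, continuous f' t) ->
  RInt f a b = 0 ->
  c ^ 2 * RInt (fun t => f t ^ 2) a b <= RInt (fun t => f' t ^ 2) a b.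
Proof.
  intros Hab Hc HcL Hf Hf' Hmean.
  assert (Hfc : forall t, continuous f t) by eauto using is_derive_continuous_R.
  set (F := fun t => RInt f a t).
  assert (HF : forall t, is_derive F t (f t)).
  { intros t. apply (is_derive_RInt (V := R_NormedModule) f F a t); auto.
    apply filter_forall. intros s. apply (RInt_correct (V := R_CompleteNormedModule)).
    now apply ex_RInt_continuous_R. }
  assert (HFc : forall t, continuous F t) by eauto using is_derive_continuous_R.
  assert (HFa : F a = 0) by apply (RInt_point (V := R_CompleteNormedModule)).
  assert (HFb : F b = 0) by exact Hmean.
  assert (Hex : forall g : R -> R, (forall t, continuous g t) -> ex_RInt g a b)
    by auto using ex_RInt_continuous_R.
  assert (Hparts : RInt (fun t => f t ^ 2) a b + RInt (fun t => F t * f' t) a b = 0).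
  { rewrite <- RInt_plus_R by (apply Hex; intros; solve_continuous).
    rewrite (RInt_derive_R (fun t => F t * f t));
      [rewrite HFa, HFb; ring | lra | | intros; solve_continuous].
    intros t _. replace (f t ^ 2 + F t * f' t) with (f t * f t + F t * f' t) by ring.
    apply (is_derive_mult (K := R_AbsRing) F f); auto. intros; apply Rmult_comm. }
  assert (Hyoung : RInt (fun t => -1 * (F t * f' t)) a b
      <= RInt (fun t => c ^ 2 / 2 * F t ^ 2 + / c ^ 2 / 2 * f' t ^ 2) a b).
  { apply RInt_le; [lra|apply Hex; intros; solve_continuous|apply Hex; intros; solve_continuous|].
    intros t _. assert (0 <= (c * F t + / c * f' t) ^ 2) by apply pow2_ge_0.
    replace ((c * F t + / c * f' t) ^ 2)
      with (c ^ 2 * F t ^ 2 + 2 * (F t * f' t) + / c ^ 2 * f' t ^ 2) in H by (field; lra).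
    lra. }
  rewrite RInt_scal_R, RInt_lincomb_R in Hyoung by (apply Hex; intros; solve_continuous).
  assert (Hdir := dirichlet_poincare F f a b c Hab Hc HcL HF Hfc HFa HFb).
  set (X := RInt (fun t => f t ^ 2) a b) in *.
  set (Y := RInt (fun t => f' t ^ 2) a b) in *.
  assert (X <= / c ^ 2 * Y) by lra.
  replace Y with (c ^ 2 * (/ c ^ 2 * Y)) by (field; lra).
  apply Rmult_le_compat_l; [nra|lra].
Qed.

Lemma wirtinger (f f' : R -> R) a b : a < b ->
  (forall t, is_derive f t (f' t)) -> (forall t, continuous f' t) ->
  RInt f a b = 0 ->
  (PI / (b - a)) ^ 2 * RInt (fun t => f t ^ 2) a b <= RInt (fun t => f' t ^ 2) a b.
Proof.
  intros Hab Hf Hf' Hmean.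
  assert (Hfc : forall t, continuous f t) by eauto using is_derive_continuous_R.
  apply le_mul_of_forall_lt; [apply pow2_gt_0, Rgt_not_eq, Rdiv_lt_0_compat; [apply PI_RGT_0|lra]
                             | apply RInt_sq_ge0; [lra|auto] |].
  intros z [Hz HzK].
  assert (Hc : 0 < sqrt z) by now apply sqrt_lt_R0.
  assert (Hcz : sqrt z ^ 2 = z) by (rewrite <- Rsqr_pow2; now apply Rsqr_sqrt, Rlt_le).
  rewrite <- Hcz. apply wirtinger_lt_pi; auto.
  assert (sqrt z < PI / (b - a)).
  { apply Rsqr_incrst_0; [rewrite Rsqr_sqrt, Rsqr_pow2; lra | lra |].
    apply Rlt_le, Rdiv_lt_0_compat; [apply PI_RGT_0|lra]. }
  apply (Rmult_lt_compat_r (b - a)) in H; [|lra].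
  replace (PI / (b - a) * (b - a)) with PI in H by (field; lra). exact H.
Qed.

Lemma RInt_sq_sub_mean (g : R -> R) a b : a < b -> (forall t, continuous g t) ->
  RInt (fun t => (g t - RInt g a b / (b - a)) ^ 2) a b
  = RInt (fun t => g t ^ 2) a b - RInt g a b ^ 2 / (b - a).
Proof.
  intros Hab Hg. set (M := RInt g a b / (b - a)).
  assert (Hex : forall h : R -> R, (forall t, continuous h t) -> ex_RInt h a b)
    by auto using ex_RInt_continuous_R.
  rewrite (RInt_ext_R _ (fun t => (1 * g t ^ 2 + (-2 * M) * g t) + M ^ 2)) by (intros; ring).
  rewrite RInt_plus_R, RInt_lincomb_R, RInt_const_R;
    [|apply Hex; intros; solve_continuous ..].
  unfold M. R_eq. field. lra.
Qed.

Lemma sq_RInt_le (g : R -> R) a b : a < b -> (forall t, continuous g t) ->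
  RInt g a b ^ 2 / (b - a) <= RInt (fun t => g t ^ 2) a b.
Proof.
  intros Hab Hg.
  assert (0 <= RInt (fun t => (g t - RInt g a b / (b - a)) ^ 2) a b)
    by (apply RInt_sq_ge0; [lra|intros; solve_continuous]).
  rewrite RInt_sq_sub_mean in H; auto. lra.
Qed.

Lemma wirtinger_mean (f f' : R -> R) a b : a < b ->
  (forall t, is_derive f t (f' t)) -> (forall t, continuous f' t) ->
  (PI / (b - a)) ^ 2 * (RInt (fun t => f t ^ 2) a b - RInt f a b ^ 2 / (b - a))
  <= RInt (fun t => f' t ^ 2) a b.
Proof.
  intros Hab Hf Hf'.
  assert (Hfc : forall t, continuous f t) by eauto using is_derive_continuous_R.
  rewrite <- RInt_sq_sub_mean by auto.
  apply wirtinger; auto.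
  - intros t. replace (f' t) with (f' t - 0) by ring.
    apply (is_derive_minus (K := R_AbsRing) (V := R_NormedModule)); [apply Hf|].
    apply (is_derive_const (K := R_AbsRing) (V := R_NormedModule)).
  - rewrite RInt_minus_R, RInt_const_R by (apply ex_RInt_continuous_R; intros; solve_continuous).
    R_eq. field. lra.
Qed.

(** * Neumann Poincaré inequality on a rectangle *)

Definition continuous2 (g : R -> R -> R) : Prop := forall x y, continuity_2d_pt g x y.

Lemma continuous2_slice_x (g : R -> R -> R) x y : continuous2 g -> continuous (fun t => g t y) x.
Proof.
  intros Hg. apply filterlim_locally. intros eps.
  destruct (Hg x y eps) as [d Hd]. exists d. intros t Ht. apply Hd; [exact Ht|].
  rewrite Rminus_diag, Rabs_R0. apply cond_pos.
Qed.

Lemma continuous2_slice_y (g : R -> R -> R) x y : continuous2 g -> continuous (fun t => g x t) y.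
Proof.
  intros Hg. apply filterlim_locally. intros eps.
  destruct (Hg x y eps) as [d Hd]. exists d. intros t Ht. apply Hd; [|exact Ht].
  rewrite Rminus_diag, Rabs_R0. apply cond_pos.
Qed.

Lemma continuous2_plus (g h : R -> R -> R) :
  continuous2 g -> continuous2 h -> continuous2 (fun x y => g x y + h x y).
Proof. intros Hg Hh x y. now apply continuity_2d_pt_plus. Qed.

Lemma continuous2_pow2 (g : R -> R -> R) : continuous2 g -> continuous2 (fun x y => g x y ^ 2).
Proof.
  intros Hg x y. apply (continuity_2d_pt_ext (fun a b => g a b * g a b)); [intros; ring|].
  now apply continuity_2d_pt_mult.
Qed.

Lemma continuous_RInt_param (g : R -> R -> R) c d x0 : continuous2 g -> c <= d ->
  continuous (fun x => RInt (fun y => g x y) c d) x0.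
Proof.
  intros Hg Hcd. apply filterlim_locally. intros eps.
  set (e := eps / (d - c + 1)).
  assert (He : 0 < e) by (apply Rdiv_lt_0_compat; [apply cond_pos|lra]).
  destruct (uniform_continuity_2d g (x0 - 1) (x0 + 1) c d (fun x y _ _ => Hg x y)
              (mkposreal e He)) as [del Hdel].
  exists (mkposreal _ (Rmin_pos _ _ (cond_pos del) Rlt_0_1)). intros t Ht.
  change (Rabs (t - x0) < Rmin del 1) in Ht.
  change (Rabs (RInt (fun y => g t y) c d - RInt (fun y => g x0 y) c d) < eps).
  assert (Hex : forall x, ex_RInt (fun y => g x y) c d)
    by (intros; apply ex_RInt_continuous_R; intros; now apply continuous2_slice_y).
  rewrite <- RInt_minus_R by auto.
  apply Rle_lt_trans with ((d - c) * e).
  - apply abs_RInt_le_const; [lra|apply (ex_RInt_minus (V := R_NormedModule)); auto|].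
    intros y Hy. left. apply Rabs_lt_between' in Ht as Ht'.
    assert (Rmin del 1 <= 1) by apply Rmin_r.
    assert (Rmin del 1 <= del) by apply Rmin_l.
    apply Hdel; try lra. rewrite Rminus_diag, Rabs_R0. apply cond_pos.
  - assert (0 < eps) by apply cond_pos.
    unfold e. apply (Rmult_lt_reg_r (d - c + 1)); [lra|].
    field_simplify; nra.
Qed.

Record C1_partials (u ux uy : R -> R -> R) : Prop := {
  C1_dx : forall x y, is_derive (fun t => u t y) x (ux x y);
  C1_dy : forall x y, is_derive (fun t => u x t) y (uy x y);
  C1_dx_cont : continuous2 ux;
  C1_dy_cont : continuous2 uy }.

(* [u] is Lipschitz in [y] near the point, as [uy] is locally bounded there, and continuous
   in [x] along the line through the point. *)
Lemma C1_partials_continuous (u ux uy : R -> R -> R) : C1_partials u ux uy -> continuous2 u.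
Proof.
  intros [Hux Huy _ Cuy] x y eps.
  destruct (Cuy x y (mkposreal 1 Rlt_0_1)) as [d1 Hd1].
  set (D := Rabs (uy x y) + 1).
  assert (HD : 0 < D) by (unfold D; generalize (Rabs_pos (uy x y)); lra).
  assert (Heps : 0 < eps) by apply cond_pos.
  destruct (proj1 (filterlim_locally _ _) (is_derive_continuous_R _ _ _ (Hux x y))
              (mkposreal (eps / 2) ltac:(lra))) as [d2 Hd2].
  set (d3 := eps / (2 * (D + 1))).
  assert (Hd3 : 0 < d3) by (apply Rdiv_lt_0_compat; lra).
  exists (mkposreal _ (Rmin_pos _ _ (cond_pos d1) (Rmin_pos _ _ (cond_pos d2) Hd3))).
  simpl. intros x' y' Hx' Hy'.
  generalize (Rmin_l d1 (Rmin d2 d3)) (Rmin_r d1 (Rmin d2 d3)) (Rmin_l d2 d3) (Rmin_r d2 d3).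
  intros M1 M2 M3 M4.
  assert (Hvar : Rabs (u x' y' - u x' y) <= D * Rabs (y' - y)).
  { apply (bounded_variation (fun t => u x' t) (uy x')). intros t Ht. split; [apply Huy|].
    assert (Rabs (uy x' t - uy x y) < 1) by (apply Hd1; lra).
    unfold D. generalize (Rabs_triang_inv (uy x' t) (uy x y)). lra. }
  assert (Hx : Rabs (u x' y - u x y) < eps / 2)
    by (apply (Hd2 x'); change (Rabs (x' - x) < d2); lra).
  assert (D * Rabs (y' - y) <= D * d3) by (apply Rmult_le_compat_l; lra).
  assert (D * d3 < eps / 2).
  { unfold d3. apply (Rmult_lt_reg_r (2 * (D + 1))); [lra|]. field_simplify; nra. }
  replace (u x' y' - u x y) with ((u x' y' - u x' y) + (u x' y - u x y)) by ring.
  generalize (Rabs_triang (u x' y' - u x' y) (u x' y - u x y)). lra.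
Qed.

Lemma is_derive_RInt_slice (u ux uy : R -> R -> R) c d x : C1_partials u ux uy ->
  is_derive (fun x => RInt (fun y => u x y) c d) x (RInt (fun y => ux x y) c d).
Proof.
  intros Hu. assert (Cu := C1_partials_continuous _ _ _ Hu). destruct Hu as [Hux Huy Cux _].
  assert (Hd : forall x y, Derive (fun t => u t y) x = ux x y)
    by (intros; now apply is_derive_unique).
  rewrite <- (RInt_ext_R (fun y => Derive (fun t => u t y) x)) by auto.
  apply is_derive_RInt_param.
  - apply filter_forall. intros x' t _. now exists (ux x' t).
  - intros t _. apply (continuity_2d_pt_ext ux); [intros; now rewrite Hd|apply Cux].
  - apply filter_forall. intros x'. apply ex_RInt_continuous_R. intros t.
    now apply continuous2_slice_y.
Qed.

Definition I2 (x0 x1 y0 y1 : R) (g : R -> R -> R) : R :=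
  RInt (fun x => RInt (fun y => g x y) y0 y1) x0 x1.

Lemma I2_plus (g h : R -> R -> R) x0 x1 y0 y1 : y0 <= y1 -> continuous2 g -> continuous2 h ->
  I2 x0 x1 y0 y1 (fun x y => g x y + h x y) = I2 x0 x1 y0 y1 g + I2 x0 x1 y0 y1 h.
Proof.
  intros Hy Hg Hh. unfold I2.
  rewrite <- RInt_plus_R by (apply ex_RInt_continuous_R; intros; now apply continuous_RInt_param).
  apply RInt_ext_R. intros x.
  apply RInt_plus_R; apply ex_RInt_continuous_R; intros; now apply continuous2_slice_y.
Qed.

Lemma I2_scal (g : R -> R -> R) k x0 x1 y0 y1 : y0 <= y1 -> continuous2 g ->
  I2 x0 x1 y0 y1 (fun x y => k * g x y) = k * I2 x0 x1 y0 y1 g.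
Proof.
  intros Hy Hg. unfold I2.
  rewrite <- RInt_scal_R by (apply ex_RInt_continuous_R; intros; now apply continuous_RInt_param).
  apply RInt_ext_R. intros x.
  apply RInt_scal_R, ex_RInt_continuous_R. intros; now apply continuous2_slice_y.
Qed.

Section PoincareCell.

Variables (u ux uy : R -> R -> R) (x0 x1 y0 y1 : R).
Hypotheses (Hu : C1_partials u ux uy) (Hx : x0 < x1) (Hy : y0 < y1).

Let Cu : continuous2 u := C1_partials_continuous _ _ _ Hu.

Let continuous_slice_RInt (g : R -> R -> R) x : continuous2 g ->
  continuous (fun x => RInt (fun y => g x y) y0 y1) x.
Proof. intros Hg. apply continuous_RInt_param; [exact Hg|lra]. Qed.

Lemma RInt_slice_sq_le :
  RInt (fun x => RInt (fun y => u x y) y0 y1 ^ 2) x0 x1 / (y1 - y0)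
  <= I2 x0 x1 y0 y1 (fun x y => u x y ^ 2).
Proof.
  unfold Rdiv. rewrite Rmult_comm, <- RInt_scal_R.
  2: apply ex_RInt_continuous_R; intros; solve_continuous; now apply continuous_slice_RInt.
  apply RInt_le_R; [lra|intros; solve_continuous; now apply continuous_slice_RInt| |].
  - intros; apply continuous_slice_RInt, continuous2_pow2, Cu.
  - intros x. rewrite Rmult_comm. apply sq_RInt_le; [lra|intros; now apply continuous2_slice_y].
Qed.

Lemma poincare_cell_x : I2 x0 x1 y0 y1 u = 0 ->
  (PI / (x1 - x0)) ^ 2 * (RInt (fun x => RInt (fun y => u x y) y0 y1 ^ 2) x0 x1 / (y1 - y0))
  <= I2 x0 x1 y0 y1 (fun x y => ux x y ^ 2).
Proof.
  intros Hmean. pose proof Hu as [_ _ Cux _].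
  set (Iux := fun x => RInt (fun y => ux x y) y0 y1).
  assert (CIux : forall x, continuous Iux x) by (intros; now apply continuous_slice_RInt).
  apply Rle_trans with (RInt (fun x => Iux x ^ 2) x0 x1 / (y1 - y0)).
  - unfold Rdiv. rewrite <- Rmult_assoc.
    apply Rmult_le_compat_r; [apply Rlt_le, Rinv_0_lt_compat; lra|].
    apply wirtinger; auto. intros x. now apply is_derive_RInt_slice with uy.
  - unfold Rdiv.
    rewrite Rmult_comm, <- RInt_scal_R by (apply ex_RInt_continuous_R; intros; solve_continuous).
    apply RInt_le_R; [lra|intros; solve_continuous| |].
    + intros; apply continuous_slice_RInt, continuous2_pow2, Cux.
    + intros x. rewrite Rmult_comm. apply sq_RInt_le; [lra|intros; now apply continuous2_slice_y].
Qed.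

Lemma poincare_cell_y :
  (PI / (y1 - y0)) ^ 2 * (I2 x0 x1 y0 y1 (fun x y => u x y ^ 2)
                          - RInt (fun x => RInt (fun y => u x y) y0 y1 ^ 2) x0 x1 / (y1 - y0))
  <= I2 x0 x1 y0 y1 (fun x y => uy x y ^ 2).
Proof.
  pose proof Hu as [_ Huy _ Cuy].
  set (Iu := fun x => RInt (fun y => u x y) y0 y1).
  assert (CIu : forall x, continuous Iu x) by (intros; now apply continuous_slice_RInt).
  assert (Hex : forall g : R -> R, (forall t, continuous g t) -> ex_RInt g x0 x1)
    by auto using ex_RInt_continuous_R.
  unfold I2. set (B := (PI / (y1 - y0)) ^ 2).
  match goal with |- B * (?W - ?Z / _) <= _ =>
    replace (B * (W - Z / (y1 - y0))) with (B * W + (- B / (y1 - y0)) * Z) by (field; lra) end.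
  rewrite <- RInt_lincomb_R.
  - apply RInt_le_R; [lra| | |].
    + intros; solve_continuous; now apply continuous_slice_RInt, continuous2_pow2.
    + intros; apply continuous_slice_RInt, continuous2_pow2, Cuy.
    + intros x. eapply Rle_trans; [|apply (wirtinger_mean (fun y => u x y) (fun y => uy x y))];
        auto using continuous2_slice_y.
      right. unfold B, Iu. field. lra.
  - apply Hex. intros; now apply continuous_slice_RInt, continuous2_pow2.
  - apply Hex. intros; solve_continuous.
Qed.

End PoincareCell.

Lemma Rmin_mul_le (A B W Z X Y : R) : 0 <= Z <= W -> A * Z <= X -> B * (W - Z) <= Y ->
  Rmin A B * W <= X + Y.
Proof.
  intros HZ HX HY.
  assert (Rmin A B * Z <= A * Z) by (apply Rmult_le_compat_r; [lra|apply Rmin_l]).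
  assert (Rmin A B * (W - Z) <= B * (W - Z)) by (apply Rmult_le_compat_r; [lra|apply Rmin_r]).
  nra.
Qed.

Lemma poincare_cell (u ux uy : R -> R -> R) x0 x1 y0 y1 :
  C1_partials u ux uy -> x0 < x1 -> y0 < y1 -> I2 x0 x1 y0 y1 u = 0 ->
  Rmin ((PI / (x1 - x0)) ^ 2) ((PI / (y1 - y0)) ^ 2) * I2 x0 x1 y0 y1 (fun x y => u x y ^ 2)
  <= I2 x0 x1 y0 y1 (fun x y => ux x y ^ 2 + uy x y ^ 2).
Proof.
  intros Hu Hx Hy Hmean. pose proof Hu as [_ _ Cux Cuy].
  rewrite I2_plus by (lra || now apply continuous2_pow2).
  apply Rmin_mul_le with (RInt (fun x => RInt (fun y => u x y) y0 y1 ^ 2) x0 x1 / (y1 - y0)).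
  - split; [|now apply (RInt_slice_sq_le u ux uy)].
    apply Rmult_le_pos; [|apply Rlt_le, Rinv_0_lt_compat; lra].
    apply RInt_sq_ge0; [lra|]. intros; apply continuous_RInt_param; [|lra].
    now apply C1_partials_continuous with ux uy.
  - now apply poincare_cell_x with uy.
  - now apply poincare_cell_y with ux.
Qed.

Lemma fsum_ext m (f g : nat -> R) : (forall i, (i < m)%nat -> f i = g i) -> fsum m f = fsum m g.
Proof.
  induction m; simpl; intros H; [reflexivity|].
  rewrite IHm by (intros; apply H; lia). rewrite H by lia. reflexivity.
Qed.

Lemma fsum_le m (f g : nat -> R) : (forall i, (i < m)%nat -> f i <= g i) -> fsum m f <= fsum m g.
Proof.
  induction m; simpl; intros H; [lra|].
  apply Rplus_le_compat; [apply IHm; intros; apply H|apply H]; lia.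
Qed.

Lemma fsum_scal m (f : nat -> R) k : k * fsum m f = fsum m (fun i => k * f i).
Proof. induction m; simpl; [ring|]. rewrite <- IHm. ring. Qed.

Lemma fsum_nonneg m (f : nat -> R) : (forall i, (i < m)%nat -> 0 <= f i) -> 0 <= fsum m f.
Proof.
  induction m; simpl; intros H; [lra|].
  apply Rplus_le_le_0_compat; [apply IHm; intros; apply H|apply H]; lia.
Qed.

Lemma fsum_pos m (f : nat -> R) j : (j < m)%nat -> 0 < f j ->
  (forall i, (i < m)%nat -> 0 <= f i) -> 0 < fsum m f.
Proof.
  induction m; simpl; intros Hj Hf H; [lia|].
  assert (0 <= f m) by (apply H; lia).
  destruct (Nat.eq_dec j m) as [->|Hne].
  - assert (0 <= fsum m f) by (apply fsum_nonneg; intros; apply H; lia). lra.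
  - assert (0 < fsum m f) by (apply IHm; auto; lia). lra.
Qed.

Lemma I2_chasles_x (g : R -> R -> R) a b c y0 y1 : y0 <= y1 -> continuous2 g ->
  I2 a c y0 y1 g = I2 a b y0 y1 g + I2 b c y0 y1 g.
Proof.
  intros Hy Hg. symmetry. apply (RInt_Chasles (V := R_CompleteNormedModule));
    apply ex_RInt_continuous_R; intros; now apply continuous_RInt_param.
Qed.

Lemma I2_chasles_y (g : R -> R -> R) x0 x1 a b c : a <= b -> b <= c -> continuous2 g ->
  I2 x0 x1 a c g = I2 x0 x1 a b g + I2 x0 x1 b c g.
Proof.
  intros Hab Hbc Hg. unfold I2.
  rewrite <- RInt_plus_R by (apply ex_RInt_continuous_R; intros; now apply continuous_RInt_param).
  apply RInt_ext_R. intros x. symmetry. apply (RInt_Chasles (V := R_CompleteNormedModule));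
    apply ex_RInt_continuous_R; intros; now apply continuous2_slice_y.
Qed.

Lemma I2_strips_x (g : R -> R -> R) p m y0 y1 : 0 <= p -> y0 <= y1 -> continuous2 g ->
  I2 0 (INR m * p) y0 y1 g = fsum m (fun i => I2 (INR i * p) (INR (S i) * p) y0 y1 g).
Proof.
  intros Hp Hy Hg. induction m; cbn [fsum].
  - rewrite Rmult_0_l. apply (RInt_point (V := R_CompleteNormedModule)).
  - rewrite <- IHm. apply I2_chasles_x; auto.
Qed.

Lemma I2_strips_y (g : R -> R -> R) x0 x1 q n : 0 <= q -> continuous2 g ->
  I2 x0 x1 0 (INR n * q) g = fsum n (fun j => I2 x0 x1 (INR j * q) (INR (S j) * q) g).
Proof.
  intros Hq Hg. induction n; cbn [fsum].
  - rewrite Rmult_0_l. unfold I2.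
    rewrite (RInt_ext_R _ (fun _ => 0))
      by (intros; apply (RInt_point (V := R_CompleteNormedModule))).
    rewrite RInt_const_R. ring.
  - rewrite <- IHn. apply I2_chasles_y; auto.
    + apply Rmult_le_pos; auto using pos_INR.
    + apply Rmult_le_compat_r; auto. apply le_INR; lia.
Qed.

Lemma I2_grid (g : R -> R -> R) p q m n : 0 <= p -> 0 <= q -> continuous2 g ->
  I2 0 (INR m * p) 0 (INR n * q) g
  = fsum m (fun i => fsum n (fun j =>
      I2 (INR i * p) (INR (S i) * p) (INR j * q) (INR (S j) * q) g)).
Proof.
  intros Hp Hq Hg. rewrite I2_strips_x by (auto; apply Rmult_le_pos; auto using pos_INR).
  apply fsum_ext. intros i _. now apply I2_strips_y.
Qed.

Lemma poincare_grid (u ux uy : R -> R -> R) p q m n :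
  C1_partials u ux uy -> 0 < p -> 0 < q ->
  (forall i j, (i < m)%nat -> (j < n)%nat ->
     I2 (INR i * p) (INR (S i) * p) (INR j * q) (INR (S j) * q) u = 0) ->
  Rmin ((PI / p) ^ 2) ((PI / q) ^ 2) * I2 0 (INR m * p) 0 (INR n * q) (fun x y => u x y ^ 2)
  <= I2 0 (INR m * p) 0 (INR n * q) (fun x y => ux x y ^ 2 + uy x y ^ 2).
Proof.
  intros Hu Hp Hq Hcell.
  pose proof Hu as [_ _ Cux Cuy]. assert (Cu := C1_partials_continuous _ _ _ Hu).
  rewrite !I2_grid by (lra || auto using continuous2_plus, continuous2_pow2).
  rewrite fsum_scal. apply fsum_le. intros i Hi.
  rewrite fsum_scal. apply fsum_le. intros j Hj.
  replace (PI / p) with (PI / (INR (S i) * p - INR i * p)) by (rewrite S_INR; f_equal; ring).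
  replace (PI / q) with (PI / (INR (S j) * q - INR j * q)) by (rewrite S_INR; f_equal; ring).
  apply poincare_cell; auto; rewrite S_INR; lra.
Qed.

(** * Min-max bounds for the Robin eigenvalues *)

Definition dot (n : nat) (r c : nat -> R) : R := fsum n (fun j => r j * c j).

Lemma dot_sub_scal n (r s c : nat -> R) k :
  dot n (fun j => r j - k * s j) c = dot n r c - k * dot n s c.
Proof. unfold dot. induction n; simpl; [ring|]. rewrite IHn. ring. Qed.

Lemma dot_extend n (r c : nat -> R) t :
  dot (S n) r (fun j => if Nat.eqb j n then t else c j) = dot n r c + r n * t.
Proof.
  unfold dot. simpl. rewrite Nat.eqb_refl. f_equal.
  apply fsum_ext. intros i Hi. destruct (Nat.eqb_spec i n); [lia|reflexivity].
Qed.

(* Eliminate the last unknown, pivoting on an equation that involves it if there is one. *)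
Lemma homogeneous_system_nontrivial n (eqs : list (nat -> R)) : (length eqs < n)%nat ->
  exists c, nonzero_coeffs n c /\ List.Forall (fun r => dot n r c = 0) eqs.
Proof.
  revert eqs. induction n as [|n IH]; intros eqs Hlen; [lia|].
  destruct (Forall_Exists_dec (fun r : nat -> R => r n = 0) (fun r => Req_dec_T (r n) 0) eqs)
    as [Hfree|Hpivot].
  - exists (fun j => if Nat.eqb j n then 1 else 0). split.
    + exists n. rewrite Nat.eqb_refl. split; [lia|lra].
    + rewrite Forall_forall in *. intros r Hr.
      rewrite (dot_extend n r (fun _ => 0)), Hfree by exact Hr.
      unfold dot. rewrite (fsum_ext _ _ (fun j => 0 * r j)), <- fsum_scal by (intros; ring).
      ring.
  - apply Exists_exists in Hpivot as [r0 [Hin Hr0]].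
    destruct (in_split _ _ Hin) as [l1 [l2 ->]].
    set (eqs' := map (fun r j => r j - r n / r0 n * r0 j) (l1 ++ l2)).
    assert (Hlen' : (length eqs' < n)%nat).
    { unfold eqs'. rewrite length_map, length_app. rewrite length_app in Hlen. simpl in Hlen. lia. }
    destruct (IH eqs' Hlen') as [c [[j [Hj Hcj]] Hsol]].
    set (t := - dot n r0 c / r0 n).
    exists (fun j => if Nat.eqb j n then t else c j). split.
    + exists j. destruct (Nat.eqb_spec j n); [lia|split; [lia|exact Hcj]].
    + assert (Helim : forall r, In r (l1 ++ l2) -> dot n r c + r n * t = 0).
      { intros r Hr. rewrite Forall_forall in Hsol.
        assert (H := Hsol _ (in_map (fun r j => r j - r n / r0 n * r0 j) _ _ Hr)).
        rewrite dot_sub_scal in H. unfold t.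
        replace (r n * (- dot n r0 c / r0 n)) with (- (r n / r0 n * dot n r0 c))
          by (field; exact Hr0).
        lra. }
      rewrite Forall_forall. intros r Hr. rewrite dot_extend.
      apply in_app_or in Hr as [Hr|[<-|Hr]].
      * apply Helim, in_or_app. auto.
      * unfold t. field. exact Hr0.
      * apply Helim, in_or_app. auto.
Qed.

Lemma robin_eig_ge alpha m L1 L2 k (K : R) :
  (forall F, admissible m L1 L2 k F -> exists c, nonzero_coeffs k c /\
     K * Nform m L1 L2 (combo k F c) <= Qform alpha m L1 L2 (combo k F c)) ->
  Rbar_le K (robin_eig alpha m L1 L2 k).
Proof.
  intros H. apply Glb_Rbar_correct. intros r [F [HF Hmax]].
  destruct (H F HF) as [c [Hc HKc]].
  assert (HN := proj2 HF c Hc).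
  assert (Hr : Rbar_le (Qform alpha m L1 L2 (combo k F c) / Nform m L1 L2 (combo k F c))
                       (max_rayleigh alpha m L1 L2 k F))
    by (apply Lub_Rbar_correct; now exists c).
  rewrite Hmax in Hr. simpl in *.
  eapply Rle_trans; [|exact Hr].
  apply Rle_div_r; lra.
Qed.

Lemma robin_eig_le alpha m L1 L2 k F (K : R) : (0 < k)%nat -> admissible m L1 L2 k F ->
  (forall c, Qform alpha m L1 L2 (combo k F c) = K * Nform m L1 L2 (combo k F c)) ->
  Rbar_le (robin_eig alpha m L1 L2 k) K.
Proof.
  intros Hk HF HQ.
  assert (Hone : nonzero_coeffs k (fun _ => 1)) by (exists 0%nat; split; [lia|lra]).
  assert (Hmax : max_rayleigh alpha m L1 L2 k F = K).
  { apply is_lub_Rbar_unique. split.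
    - intros r [c [Hc ->]]. rewrite HQ. right. field. apply Rgt_not_eq, (proj2 HF c Hc).
    - intros b Hb. apply Hb. exists (fun _ => 1). split; [exact Hone|].
      rewrite HQ. field. apply Rgt_not_eq, (proj2 HF _ Hone). }
  apply Glb_Rbar_correct. now exists F.
Qed.

Lemma C1_R2_const (a : R) : C1_R2 (fun _ _ => a).
Proof.
  intros x y. unfold dx, dy.
  split; [|split; [|split]];
    try apply (ex_derive_const (K := R_AbsRing) (V := R_NormedModule));
    apply (continuous_ext (fun _ => 0)); try apply continuous_const;
    intros; now rewrite Derive_const.
Qed.

Lemma robin_energy_const alpha L1 L2 (a : R) :
  robin_energy alpha L1 L2 (fun _ _ => a) = 2 * alpha * (L1 + L2) * a ^ 2.
Proof.
  unfold robin_energy, dint, dx, dy.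
  rewrite (RInt_ext_R (fun x => RInt _ 0 L2) (fun _ => 0)).
  - rewrite !RInt_const_R. ring.
  - intros x. rewrite (RInt_ext_R _ (fun _ => 0)), RInt_const_R; [ring|].
    intros y. rewrite !Derive_const. ring.
Qed.

Lemma l2norm2_const L1 L2 (a : R) : l2norm2 L1 L2 (fun _ _ => a) = L1 * L2 * a ^ 2.
Proof.
  unfold l2norm2, dint. rewrite (RInt_ext_R _ (fun _ => L2 * a ^ 2)), RInt_const_R; [ring|].
  intros x. rewrite RInt_const_R. ring.
Qed.

Definition square_indicator (j i : nat) (x y : R) : R := if Nat.eqb i j then 1 else 0.

Lemma fsum_indicator k (c : nat -> R) i : (i < k)%nat ->
  fsum k (fun j => c j * (if Nat.eqb i j then 1 else 0)) = c i.
Proof.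
  induction k as [|k IH]; intros Hi; [lia|]. simpl.
  destruct (Nat.eqb_spec i k) as [->|Hne].
  - rewrite (fsum_ext _ _ (fun j => 0 * c j)), <- fsum_scal; [ring|].
    intros j Hj. destruct (Nat.eqb_spec k j); [lia|ring].
  - rewrite IH by lia. ring.
Qed.

Lemma robin_eig_squares_le alpha k L : (0 < k)%nat -> 0 < L ->
  Rbar_le (robin_eig alpha k L L k) (4 * alpha / L).
Proof.
  intros Hk HL. apply robin_eig_le with square_indicator; [exact Hk| |].
  - split; [intros; unfold square_indicator; apply C1_R2_const|].
    intros c [j [Hj Hcj]]. unfold Nform, combo, square_indicator.
    rewrite (fsum_ext _ _ (fun i => L * L * c i ^ 2)).
    + apply (fsum_pos _ _ j Hj); [apply Rmult_lt_0_compat; [nra|now apply pow2_gt_0]|].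
      intros. apply Rmult_le_pos; [nra|apply pow2_ge_0].
    + intros i Hi. now rewrite l2norm2_const, fsum_indicator.
  - intros c. unfold Qform, Nform, combo, square_indicator. rewrite fsum_scal.
    apply fsum_ext. intros i _. rewrite robin_energy_const, l2norm2_const. field. lra.
Qed.

Lemma C1_partials_of_C1_R2 (g : R -> R -> R) : C1_R2 g -> C1_partials g (dx g) (dy g).
Proof.
  intros H. split; intros x y; destruct (H x y) as [H1 [H2 [H3 H4]]].
  - now apply Derive_correct.
  - now apply Derive_correct.
  - now apply continuity_2d_pt_filterlim.
  - now apply continuity_2d_pt_filterlim.
Qed.

Lemma dx_of_C1_partials (u ux uy : R -> R -> R) x y : C1_partials u ux uy -> dx u x y = ux x y.
Proof. intros Hu. apply is_derive_unique, Hu. Qed.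

Lemma dy_of_C1_partials (u ux uy : R -> R -> R) x y : C1_partials u ux uy -> dy u x y = uy x y.
Proof. intros Hu. apply is_derive_unique, Hu. Qed.

Lemma C1_partials_fsum k (c : nat -> R) (G Gx Gy : nat -> R -> R -> R) :
  (forall j, (j < k)%nat -> C1_partials (G j) (Gx j) (Gy j)) ->
  C1_partials (fun x y => fsum k (fun j => c j * G j x y))
              (fun x y => fsum k (fun j => c j * Gx j x y))
              (fun x y => fsum k (fun j => c j * Gy j x y)).
Proof.
  induction k as [|k IH]; intros H.
  - split; intros x y; simpl;
      first [apply (is_derive_const (K := R_AbsRing) (V := R_NormedModule))
            | apply continuity_2d_pt_const].
  - destruct (IH (fun j Hj => H j (Nat.lt_lt_succ_r _ _ Hj))) as [A1 A2 A3 A4].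
    destruct (H k (Nat.lt_succ_diag_r k)) as [B1 B2 B3 B4].
    split; intros x y; simpl.
    + apply (is_derive_plus (K := R_AbsRing) (V := R_NormedModule)); auto using is_derive_scal.
    + apply (is_derive_plus (K := R_AbsRing) (V := R_NormedModule)); auto using is_derive_scal.
    + auto using continuity_2d_pt_plus, continuity_2d_pt_mult, continuity_2d_pt_const.
    + auto using continuity_2d_pt_plus, continuity_2d_pt_mult, continuity_2d_pt_const.
Qed.

Lemma continuous2_fsum k (c : nat -> R) (G : nat -> R -> R -> R) :
  (forall j, (j < k)%nat -> continuous2 (G j)) ->
  continuous2 (fun x y => fsum k (fun j => c j * G j x y)).
Proof.
  induction k as [|k IH]; intros H x y; simpl; [apply continuity_2d_pt_const|].
  apply continuity_2d_pt_plus; [apply IH; auto|].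
  apply continuity_2d_pt_mult; [apply continuity_2d_pt_const|apply H; lia].
Qed.

Lemma I2_fsum x0 x1 y0 y1 k (c : nat -> R) (G : nat -> R -> R -> R) : y0 <= y1 ->
  (forall j, (j < k)%nat -> continuous2 (G j)) ->
  I2 x0 x1 y0 y1 (fun x y => fsum k (fun j => c j * G j x y))
  = fsum k (fun j => c j * I2 x0 x1 y0 y1 (G j)).
Proof.
  intros Hy. induction k as [|k IH]; intros H; simpl.
  - unfold I2. rewrite (RInt_ext_R _ (fun _ => 0)), RInt_const_R; [ring|].
    intros x. rewrite RInt_const_R. ring.
  - assert (HG : forall j, (j < k)%nat -> continuous2 (G j)) by (intros; apply H; lia).
    assert (HGk : continuous2 (G k)) by (apply H; lia).
    rewrite I2_plus, I2_scal, IH; auto using continuous2_fsum.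
    intros x y. apply continuity_2d_pt_mult; auto using continuity_2d_pt_const.
Qed.

Lemma dirichlet_le_robin_energy alpha L1 L2 (u ux uy : R -> R -> R) :
  0 <= alpha -> 0 <= L1 -> 0 <= L2 -> C1_partials u ux uy ->
  I2 0 L1 0 L2 (fun x y => ux x y ^ 2 + uy x y ^ 2) <= robin_energy alpha L1 L2 u.
Proof.
  intros Ha H1 H2 Hu. assert (Cu := C1_partials_continuous _ _ _ Hu).
  unfold robin_energy.
  replace (dint L1 L2 (fun x y => dx u x y ^ 2 + dy u x y ^ 2))
    with (I2 0 L1 0 L2 (fun x y => ux x y ^ 2 + uy x y ^ 2)).
  2: { apply RInt_ext_R. intros x. apply RInt_ext_R. intros y.
       now rewrite (dx_of_C1_partials u ux uy), (dy_of_C1_partials u ux uy). }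
  enough (0 <= RInt (fun x => u x 0 ^ 2 + u x L2 ^ 2) 0 L1
            /\ 0 <= RInt (fun y => u 0 y ^ 2 + u L1 y ^ 2) 0 L2) by nra.
  split; apply RInt_ge_0; auto; try (intros; apply Rplus_le_le_0_compat; apply pow2_ge_0);
    apply ex_RInt_continuous_R; intros; solve_continuous;
    auto using continuous2_slice_x, continuous2_slice_y.
Qed.

Definition cell_equations (m n : nat) (p q : R) (G : nat -> R -> R -> R) : list (nat -> R) :=
  map (fun ij j => I2 (INR (fst ij) * p) (INR (S (fst ij)) * p)
                      (INR (snd ij) * q) (INR (S (snd ij)) * q) (G j))
      (list_prod (seq 0 m) (seq 0 n)).

Lemma robin_eig_rect_ge alpha L1 L2 k m n : 0 <= alpha -> 0 < L1 -> 0 < L2 ->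
  (0 < m)%nat -> (0 < n)%nat -> (m * n < k)%nat ->
  Rbar_le (Rmin ((PI * INR m / L1) ^ 2) ((PI * INR n / L2) ^ 2)) (robin_eig alpha 1 L1 L2 k).
Proof.
  intros Ha H1 H2 Hm Hn Hmn.
  apply lt_0_INR in Hm, Hn.
  set (p := L1 / INR m). set (q := L2 / INR n).
  assert (Hp : 0 < p) by (apply Rdiv_lt_0_compat; lra).
  assert (Hq : 0 < q) by (apply Rdiv_lt_0_compat; lra).
  replace (PI * INR m / L1) with (PI / p) by (unfold p; field; lra).
  replace (PI * INR n / L2) with (PI / q) by (unfold q; field; lra).
  apply robin_eig_ge. intros F [HF _].
  set (G := fun j => F j 0%nat).
  destruct (homogeneous_system_nontrivial k (cell_equations m n p q G)) as [c [Hc Hsol]].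
  { unfold cell_equations. rewrite length_map, length_prod, !length_seq. lia. }
  exists c. split; [exact Hc|].
  assert (HG : forall j, (j < k)%nat -> C1_partials (G j) (dx (G j)) (dy (G j)))
    by (intros; apply C1_partials_of_C1_R2, HF; lia).
  assert (Hu := C1_partials_fsum k c G (fun j => dx (G j)) (fun j => dy (G j)) HG).
  cbn [Qform Nform fsum]. rewrite !Rplus_0_l.
  eapply Rle_trans; [|apply dirichlet_le_robin_energy; eauto; lra].
  unfold l2norm2, dint. fold (I2 0 L1 0 L2).
  replace L1 with (INR m * p) by (unfold p; field; lra).
  replace L2 with (INR n * q) by (unfold q; field; lra).
  apply poincare_grid; auto.
  intros i j Hi Hj. rewrite List.Forall_forall in Hsol.
  unfold combo. rewrite I2_fsum.
  - assert (Hij : In (i, j) (list_prod (seq 0 m) (seq 0 n))) by (apply in_prod; apply in_seq; lia).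
    rewrite <- (Hsol _ (in_map _ _ _ Hij)). apply fsum_ext. intros. apply Rmult_comm.
  - apply Rmult_le_compat_r; [lra|]. apply le_INR. lia.
  - intros. eapply C1_partials_continuous, HG. lia.
Qed.

Lemma exists_nat_ceil x : 0 < x -> exists m : nat, (0 < m)%nat /\ x <= INR m < x + 1.
Proof.
  intros Hx. destruct (Zceil_bound x) as [Hlt Hle].
  assert (Hpos : (0 < Zceil x)%Z) by (apply lt_IZR; lra).
  exists (Z.to_nat (Zceil x)). rewrite INR_IZR_INZ, Z2Nat.id by lia. split; [lia|lra].
Qed.

Lemma plus_inv_le_mono a s : 1 <= a -> a <= s -> a + / a <= s + / s.
Proof.
  intros Ha Has.
  apply (Rmult_le_reg_r (a * s)); [nra|].
  replace ((a + / a) * (a * s)) with (a * a * s + s) by (field; lra).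
  replace ((s + / s) * (a * s)) with (a * (s * s) + a) by (field; lra).
  assert (0 <= (s - a) * (a * s - 1)) by (apply Rmult_le_pos; nra).
  nra.
Qed.

Lemma grid_count_lt (T a s : R) (m n k : nat) : 0 < T -> 1 <= a -> a <= s ->
  INR m < a * T + 1 -> INR n < T / a + 1 -> T ^ 2 + T * (s + / s) + 1 <= INR k ->
  (m * n < k)%nat.
Proof.
  intros HT Ha Has Hm Hn Hk. apply INR_lt. rewrite mult_INR.
  assert (T * (a + / a) <= T * (s + / s))
    by (apply Rmult_le_compat_l; [lra|now apply plus_inv_le_mono]).
  assert ((a * T + 1) * (T / a + 1) = T ^ 2 + T * (a + / a) + 1) by (field; lra).
  assert (0 < T / a) by (apply Rdiv_lt_0_compat; lra).
  assert (INR m * INR n < (a * T + 1) * (T / a + 1)) by (generalize (pos_INR m) (pos_INR n); nra).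
  lra.
Qed.

Lemma rect_grid_exists A alpha k a : 0 < A -> 0 < alpha -> (0 < k)%nat ->
  4 * sqrt A * sqrt (INR k) * alpha / PI ^ 2
  + 2 * sqrt (sqrt A) * sqrt (sqrt (INR k)) * sqrt alpha / PI * (sqrt (INR k) + / sqrt (INR k))
  + 1 <= INR k ->
  1 <= a -> a <= sqrt (INR k) ->
  exists m n : nat, (0 < m)%nat /\ (0 < n)%nat /\ (m * n < k)%nat /\
    4 * alpha / sqrt (A / INR k)
    <= Rmin ((PI * INR m / (sqrt A * a)) ^ 2) ((PI * INR n / (sqrt A / a)) ^ 2).
Proof.
  intros HA Halpha Hk Hcond Ha1 Ha2.
  assert (Hk' : 0 < INR k) by now apply lt_0_INR.
  assert (HPI := PI_RGT_0).
  set (sA := sqrt A) in *. set (sk := sqrt (INR k)) in *.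
  assert (HsA : 0 < sA) by now apply sqrt_lt_R0.
  assert (Hsk : 0 < sk) by now apply sqrt_lt_R0.
  (* [T] makes the hypothesis read [T^2 + T (√k + 1/√k) + 1 <= k]. *)
  set (T := 2 * sqrt sA * sqrt sk * sqrt alpha / PI) in *.
  assert (HT : 0 < T).
  { unfold T. apply Rdiv_lt_0_compat; [|lra].
    repeat apply Rmult_lt_0_compat; try lra; now apply sqrt_lt_R0. }
  assert (HT2 : T ^ 2 = 4 * sA * sk * alpha / PI ^ 2).
  { unfold T. rewrite <- (sqrt_sqrt sA), <- (sqrt_sqrt sk), <- (sqrt_sqrt alpha) at 2 by lra.
    field. lra. }
  assert (Hbound : 4 * alpha / sqrt (A / INR k) = (PI * T / sA) ^ 2).
  { rewrite sqrt_div_alt by lra. fold sA sk.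
    replace ((PI * T / sA) ^ 2) with (PI ^ 2 * T ^ 2 / (sA * sA)) by (field; lra).
    rewrite HT2. field. lra. }
  destruct (exists_nat_ceil (a * T)) as [m [Hm [Hm1 Hm2]]]; [nra|].
  destruct (exists_nat_ceil (T / a)) as [n [Hn [Hn1 Hn2]]]; [apply Rdiv_lt_0_compat; lra|].
  exists m, n. split; [exact Hm|]. split; [exact Hn|]. split.
  - apply (grid_count_lt T a sk); auto. lra.
  - rewrite Hbound. apply Rmin_glb; apply pow_incr; split;
      try (apply Rlt_le, Rdiv_lt_0_compat; nra).
    + apply (Rmult_le_reg_r (sA * a)); [nra|]. field_simplify; nra.
    + apply (Rmult_le_reg_r (sA / a)); [apply Rdiv_lt_0_compat; lra|]. field_simplify; nra.
Qed.

Theorem lemma7p3 (A alpha : R) (k : nat)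
  (HA : 0 < A) (Halpha : 0 < alpha) (Hk : (3 <= k)%nat)
  (Hcond : 4 * sqrt A * sqrt (INR k) * alpha / PI ^ 2
           + 2 * sqrt (sqrt A) * sqrt (sqrt (INR k)) * sqrt alpha / PI
             * (sqrt (INR k) + / sqrt (INR k))
           + 1 <= INR k) :
  forall a : R, 1 <= a -> a <= sqrt (INR k) ->
    Rbar_le (eig_squares A alpha k k) (eig_rect A a alpha k).
Proof.
  intros a Ha1 Ha2.
  destruct (rect_grid_exists A alpha k a) as [m [n [Hm [Hn [Hmn Hle]]]]]; auto; [lia|].
  assert (HsA : 0 < sqrt A) by now apply sqrt_lt_R0.
  apply Rbar_le_trans with (4 * alpha / sqrt (A / INR k)).
  - apply robin_eig_squares_le; [lia|].
    apply sqrt_lt_R0, Rdiv_lt_0_compat; [lra|apply lt_0_INR; lia].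
  - apply Rbar_le_trans
      with (Rmin ((PI * INR m / (sqrt A * a)) ^ 2) ((PI * INR n / (sqrt A / a)) ^ 2));
      [exact Hle|].
    apply robin_eig_rect_ge; auto; [lra|nra|apply Rdiv_lt_0_compat; lra].
Qed.
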